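(* (a) For every MT-algebra $M$, the map $1_M$ is a proximity morphism $M\to M$. (b) If $f:M_1\to M_2$ and $g:M_2\to M_3$ are proximity morphisms, then $g\star f:M_1\to M_3$ is a proximity morphism. (c) For proximity morphisms $f:M_1\to M_2$, $g:M_2\to M_3$, $h:M_3\to M_4$ and every $a\in M_1$, $((h\star g)\star f)(a)=\bigvee\{h(g(f(x))):x\in\mathcal{LC}M_1,\ x\le a\}=(h\star(g\star f))(a)$. (d) For every proximity morphism $f:M\to N$, $1_N\star f=f=f\star 1_M$. Consequently, MT-algebras with proximity morphisms, composition $\star$ and identities $1_M$ form a category $\mathbf{MT_P}$.
   Context: An MT-algebra is a pair $(M,\square)$ where $M$ is a complete boolean algebra and $\square:M\to M$ satisfies $\square 1=1$, $\square(a\wedge b)=\square a\wedge\square b$, $\square a\le a$, $\square a\le\square\square a$. Write $\Diamond a=\neg\square\neg a$. An element $a$ is open if $\square a=a$ and locally closed if $a=\square b\wedge\Diamond c$ for some $b,c\in M$; $\mathcal O M$, $\mathcal{LC} M$ denote the sets of open and locally closed elements; $\mathcal O M$ is a frame. A proximity morphism between MT-algebras $M,N$ is a map $f:M\to N$ such that: (P1) $f$ maps $\mathcal O M$ into $\mathcal O N$ and $f|_{\mathcal O M}$ is a frame morphism; (P2) $f(a\wedge b)=f(a)\wedge f(b)$; (P3) $f(\bigvee S)=\bigvee f[S]$ for every finite $S\subseteq\mathcal{LC}M$; (P4) $f(a)=\bigvee\{f(x): x\in\mathcal{LC}M,\ x\le a\}$ for every $a\in M$. For proximity morphisms $f:M_1\to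 M_2$, $g:M_2\to M_3$ define $(g\star f)(a)=\bigvee\{g(f(x)): x\in\mathcal{LC}M_1,\ x\le a\}$. For an MT-algebra $M$ define $1_M:M\to M$ by $1_M(a)=\bigvee\{x\in\mathcal{LC}M: x\le a\}$. *)

From Stdlib Require Import List.
Set Implicit Arguments.

Record CBA := {
  car :> Type;
  le : car -> car -> Prop;
  meet : car -> car -> car;
  join : car -> car -> car;
  top : car;
  bot : car;
  compl : car -> car;
  sup : (car -> Prop) -> car;
  le_refl : forall a, le a a;
  le_antisym : forall a b, le a b -> le b a -> a = b;
  le_trans : forall a b c, le a b -> le b c -> le a c;
  meet_glb : forall a b c, le c (meet a b) <-> (le c a /\ le c b);
  join_lub : forall a b c, le (join a b) c <-> (le a c /\ le b c);
  top_max : forall a, le a top;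
  bot_min : forall a, le bot a;
  distr : forall a b c, meet a (join b c) = join (meet a b) (meet a c);
  compl_meet : forall a, meet a (compl a) = bot;
  compl_join : forall a, join a (compl a) = top;
  sup_lub : forall (S : car -> Prop) c,
      le (sup S) c <-> (forall x, S x -> le x c)
}.

Record MTAlgebra := {
  cba :> CBA;
  box : cba -> cba;
  box_top : box (top cba) = top cba;
  box_meet : forall a b, box (meet cba a b) = meet cba (box a) (box b);
  box_defl : forall a, le cba (box a) a;
  box_idem : forall a, le cba (box a) (box (box a))
}.

Definition dia {M : MTAlgebra} (a : M) : M := compl M (box M (compl M a)).

Definition is_open {M : MTAlgebra} (a : M) : Prop := box M a = a.

Definition is_LC {M : MTAlgebra} (a : M) : Prop :=
  exists b c : M, a = meet M (box M b) (dia c).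

Definition img (A B : Type) (f : A -> B) (S : A -> Prop) : B -> Prop :=
  fun y => exists x, S x /\ y = f x.

(* Proximity morphism (P1)-(P4).  (P1): f maps opens to opens and its
   restriction to the frame O M is a frame morphism; joins and finite meets
   in O M are computed as in M (opens are closed under them). *)
Definition proximity {M N : MTAlgebra} (f : M -> N) : Prop :=
  (forall a : M, is_open a -> is_open (f a)) /\
  f (top M) = top N /\
  (forall a b : M, is_open a -> is_open b -> f (meet M a b) = meet N (f a) (f b)) /\
  (forall S : M -> Prop, (forall x, S x -> is_open x) ->
      f (sup M S) = sup N (img f S)) /\
  (forall a b : M, f (meet M a b) = meet N (f a) (f b)) /\
  (* P3: finite sets of locally closed elements, given as lists *)
  (forall s : list M, (forall x, In x s -> is_LC x) ->
      f (sup M (fun x => In x s)) = sup N (img f (fun x => In x s))) /\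
  (forall a : M, f a = sup N (img f (fun x => is_LC x /\ le M x a))).

Definition star {M1 M2 M3 : MTAlgebra} (g : M2 -> M3) (f : M1 -> M2) : M1 -> M3 :=
  fun a => sup M3 (img (fun x => g (f x)) (fun x => is_LC x /\ le M1 x a)).

Definition idP (M : MTAlgebra) : M -> M :=
  fun a => sup M (fun x => is_LC x /\ le M x a).

(** Both [g * f] and [1_M] are the extension [a |-> \/ {F x : x in LC, x <= a}]
    of a map [F] satisfying (P1)-(P3) (namely [g o f], resp. the identity).
    Such maps are closed under composition, because (P1)-(P3) already force
    them to send locally closed elements to locally closed ones, and the
    extension of any such map satisfies (P1)-(P4), since locally closed
    elements are closed under finite meets.  By (P4) a proximity morphism is
    determined by its values on locally closed elements, so associativity and
    the unit laws reduce to the agreement of the relevant maps there. *)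

From Stdlib Require Import List FunctionalExtensionality.

Section CompleteBooleanAlgebra.
Variable B : CBA.
Local Notation "x <= y" := (le B x y).
Local Notation "x /\' y" := (meet B x y) (at level 40).
Local Notation "x \/' y" := (join B x y) (at level 45).
Local Notation "- x" := (compl B x).

Lemma meet_le_l a b : a /\' b <= a.
Proof. apply (proj1 (proj1 (meet_glb B a b _) (le_refl B _))). Qed.

Lemma meet_le_r a b : a /\' b <= b.
Proof. apply (proj2 (proj1 (meet_glb B a b _) (le_refl B _))). Qed.

Lemma le_join_l a b : a <= a \/' b.
Proof. apply (proj1 (proj1 (join_lub B a b _) (le_refl B _))). Qed.

Lemma le_join_r a b : b <= a \/' b.
Proof. apply (proj2 (proj1 (join_lub B a b _) (le_refl B _))). Qed.

Lemma le_meet a b c : c <= a -> c <= b -> c <= a /\' b.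
Proof. intros; apply meet_glb; auto. Qed.

Lemma join_le a b c : a <= c -> b <= c -> a \/' b <= c.
Proof. intros; apply join_lub; auto. Qed.

Lemma meet_comm a b : a /\' b = b /\' a.
Proof. apply le_antisym; apply le_meet; (apply meet_le_r || apply meet_le_l). Qed.

Lemma join_comm a b : a \/' b = b \/' a.
Proof. apply le_antisym; apply join_le; (apply le_join_r || apply le_join_l). Qed.

Lemma meet_mono a b c d : a <= b -> c <= d -> a /\' c <= b /\' d.
Proof.
  intros Hab Hcd. apply le_meet.
  - apply (le_trans B _ a); [apply meet_le_l | exact Hab].
  - apply (le_trans B _ c); [apply meet_le_r | exact Hcd].
Qed.

Lemma meet_assoc a b c : a /\' (b /\' c) = (a /\' b) /\' c.
Proof.
  apply le_antisym.
  - apply le_meet; [apply meet_mono|]; auto using le_refl, meet_le_l.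
    apply (le_trans B _ (b /\' c)); apply meet_le_r.
  - apply le_meet; [|apply meet_mono]; auto using le_refl, meet_le_r.
    apply (le_trans B _ (a /\' b)); apply meet_le_l.
Qed.

Lemma meet_eq_l a b : a <= b -> a /\' b = a.
Proof. intros. apply le_antisym; auto using meet_le_l, le_meet, le_refl. Qed.

Lemma meet_top_r a : a /\' top B = a.
Proof. apply meet_eq_l, top_max. Qed.

Lemma join_bot_r a : a \/' bot B = a.
Proof. apply le_antisym; auto using join_le, le_refl, bot_min, le_join_l. Qed.

Lemma le_bot_eq a : a <= bot B -> a = bot B.
Proof. intros. apply le_antisym; auto using bot_min. Qed.

Lemma top_le_eq a : top B <= a -> a = top B.
Proof. intros. apply le_antisym; auto using top_max. Qed.

Lemma meet_le_iff a b c : a /\' b <= c <-> b <= (- a) \/' c.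
Proof.
  split; intro H.
  - rewrite <- (meet_top_r b), <- (compl_join B a), distr.
    apply join_le.
    + apply (le_trans B _ c); [rewrite meet_comm; exact H | apply le_join_r].
    + apply (le_trans B _ (- a)); [apply meet_le_r | apply le_join_l].
  - apply (le_trans B _ (a /\' ((- a) \/' c))); [apply meet_mono; auto using le_refl|].
    rewrite distr, compl_meet. apply join_le; [apply bot_min | apply meet_le_r].
Qed.

Lemma compl_unique a b : a /\' b = bot B -> a \/' b = top B -> b = - a.
Proof.
  intros Hmeet Hjoin. apply le_antisym.
  - rewrite <- (meet_top_r b), <- (compl_join B a), distr, (meet_comm b a), Hmeet.
    apply join_le; [apply bot_min | apply meet_le_r].
  - rewrite <- (meet_top_r (- a)), <- Hjoin, distr, meet_comm, compl_meet.
    apply join_le; [apply bot_min | apply meet_le_r].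
Qed.

Lemma compl_involutive a : - (- a) = a.
Proof.
  symmetry. apply compl_unique.
  - rewrite meet_comm. apply compl_meet.
  - rewrite join_comm. apply compl_join.
Qed.

Lemma le_compl_iff c d : c <= - d <-> d /\' c <= bot B.
Proof. rewrite meet_le_iff, join_bot_r. tauto. Qed.

Lemma compl_antitone a b : a <= b -> - b <= - a.
Proof.
  intros H. apply le_compl_iff, (le_trans B _ (b /\' - b)).
  - apply meet_mono; auto using le_refl.
  - rewrite compl_meet. apply le_refl.
Qed.

Lemma compl_join_meet a b : - (a \/' b) = (- a) /\' (- b).
Proof.
  apply le_antisym.
  - apply le_meet; apply compl_antitone; (apply le_join_l || apply le_join_r).
  - apply le_compl_iff. rewrite meet_comm, distr. apply join_le.
    + rewrite <- (compl_meet B a), meet_comm.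
      apply meet_mono; [apply le_refl | apply meet_le_l].
    + rewrite <- (compl_meet B b), meet_comm.
      apply meet_mono; [apply le_refl | apply meet_le_r].
Qed.

Lemma sup_upper (S : B -> Prop) x : S x -> x <= sup B S.
Proof. intros Hx. apply (proj1 (sup_lub B S _) (le_refl B _) x Hx). Qed.

Lemma sup_least (S : B -> Prop) c : (forall x, S x -> x <= c) -> sup B S <= c.
Proof. apply sup_lub. Qed.

Lemma sup_mono (S T : B -> Prop) :
  (forall x, S x -> exists y, T y /\ x <= y) -> sup B S <= sup B T.
Proof.
  intros H. apply sup_least. intros x Hx. destruct (H x Hx) as [y [Hy Hxy]].
  apply (le_trans B _ y); auto using sup_upper.
Qed.

Lemma sup_ext (S T : B -> Prop) : (forall x, S x <-> T x) -> sup B S = sup B T.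
Proof.
  intros H. apply le_antisym; apply sup_mono; intros x Hx; exists x;
    split; auto using le_refl; apply H; exact Hx.
Qed.

Lemma meet_sup_le a (S : B -> Prop) c :
  (forall s, S s -> a /\' s <= c) -> a /\' sup B S <= c.
Proof. intros H. apply meet_le_iff, sup_least. intros. apply meet_le_iff; auto. Qed.

Lemma meet_sup_sup_le (S T : B -> Prop) c :
  (forall s t, S s -> T t -> s /\' t <= c) -> sup B S /\' sup B T <= c.
Proof.
  intros H. apply meet_sup_le. intros t Ht. rewrite meet_comm. apply meet_sup_le.
  intros s Hs. rewrite meet_comm. auto.
Qed.

Lemma sup_nil : sup B (fun x => In x nil) = bot B.
Proof. apply le_bot_eq, sup_least. intros x []. Qed.

Lemma sup_pair x y : sup B (fun z => In z (x :: y :: nil)) = x \/' y.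
Proof.
  apply le_antisym.
  - apply sup_least. intros z [<-|[<-|[]]]; [apply le_join_l | apply le_join_r].
  - apply join_le; apply sup_upper; simpl; auto.
Qed.

End CompleteBooleanAlgebra.

Lemma sup_img_ext (A B : CBA) (F G : A -> B) (S : A -> Prop) :
  (forall x, S x -> F x = G x) -> sup B (img F S) = sup B (img G S).
Proof.
  intros H. apply sup_ext. intros y; split; intros [x [Hx ->]]; exists x;
    split; auto. symmetry; auto.
Qed.

Lemma sup_img_id (B : CBA) (S : B -> Prop) : sup B (img (fun x => x) S) = sup B S.
Proof.
  apply sup_ext. intros y. split; [intros [x [Hx ->]]; exact Hx | exists y; auto].
Qed.

Lemma sup_img_comp (A B C : CBA) (F : A -> B) (G : B -> C) (S : A -> Prop) :
  sup C (img G (img F S)) = sup C (img (fun x => G (F x)) S).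
Proof.
  apply sup_ext. intros y. split.
  - intros [z [[x [Hx ->]] ->]]. exists x. auto.
  - intros [x [Hx ->]]. exists (F x). split; [exists x|]; auto.
Qed.

Lemma img_In (A B : Type) (F : A -> B) (s : list A) y :
  img F (fun x => In x s) y <-> In y (map F s).
Proof. rewrite in_map_iff. split; intros [x [H1 H2]]; exists x; auto. Qed.

Section MTAlgebraFacts.
Variable M : MTAlgebra.
Local Notation "x <= y" := (le M x y).
Local Notation "x /\' y" := (meet M x y) (at level 40).
Local Notation "x \/' y" := (join M x y) (at level 45).
Local Notation "- x" := (compl M x).

Lemma box_mono (a b : M) : a <= b -> box M a <= box M b.
Proof. intros H. rewrite <- (meet_eq_l _ _ _ H), box_meet. apply meet_le_r. Qed.

Lemma open_box (a : M) : is_open (box M a).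
Proof. apply le_antisym; [apply box_defl | apply box_idem]. Qed.

Lemma open_top : is_open (top M).
Proof. apply box_top. Qed.

Lemma open_meet (a b : M) : is_open a -> is_open b -> is_open (a /\' b).
Proof. unfold is_open; intros Ha Hb. rewrite box_meet, Ha, Hb. reflexivity. Qed.

Lemma open_sup (S : M -> Prop) : (forall x, S x -> is_open x) -> is_open (sup M S).
Proof.
  intros H. apply le_antisym; [apply box_defl|]. apply sup_least. intros x Hx.
  rewrite <- (H x Hx). apply box_mono, sup_upper, Hx.
Qed.

Lemma open_join (a b : M) : is_open a -> is_open b -> is_open (a \/' b).
Proof.
  intros Ha Hb. rewrite <- sup_pair.
  apply open_sup. intros x [<-|[<-|[]]]; assumption.
Qed.

Lemma open_bot : is_open (bot M).
Proof. apply le_bot_eq, box_defl. Qed.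

Lemma is_LC_open_diff (x : M) :
  is_LC x <-> exists u v, is_open u /\ is_open v /\ x = u /\' (- v).
Proof.
  split.
  - intros [b [c ->]]. exists (box M b), (box M (- c)).
    split; [|split]; auto using open_box.
  - intros [u [v [Hu [Hv ->]]]]. exists u, (- v).
    unfold dia. rewrite compl_involutive, Hu, Hv. reflexivity.
Qed.

Lemma open_LC (a : M) : is_open a -> is_LC a.
Proof.
  intros H. apply is_LC_open_diff. exists a, (bot M).
  split; [|split]; auto using open_bot.
  rewrite <- (compl_unique M (bot M) (top M)).
  - symmetry. apply meet_top_r.
  - apply le_bot_eq, meet_le_l.
  - apply top_le_eq, le_join_r.
Qed.

Lemma compl_open_LC (v : M) : is_open v -> is_LC (- v).
Proof.
  intros H. apply is_LC_open_diff. exists (top M), v.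
  split; [|split]; auto using open_top.
  rewrite meet_comm. symmetry. apply meet_top_r.
Qed.

Lemma LC_meet (x y : M) : is_LC x -> is_LC y -> is_LC (x /\' y).
Proof.
  rewrite !is_LC_open_diff.
  intros [u [v [Hu [Hv ->]]]] [u' [v' [Hu' [Hv' ->]]]].
  exists (u /\' u'), (v \/' v').
  split; [|split]; auto using open_meet, open_join.
  rewrite compl_join_meet, !meet_assoc. f_equal. rewrite <- !meet_assoc.
  f_equal. apply meet_comm.
Qed.

Lemma idP_LC (x : M) : is_LC x -> idP M x = x.
Proof.
  intros H. apply le_antisym.
  - apply sup_least. intros y [_ Hy]. exact Hy.
  - apply sup_upper. split; [exact H | apply le_refl].
Qed.

End MTAlgebraFacts.

Record pre_proximity {M N : MTAlgebra} (f : M -> N) : Prop := {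
  pre_open : forall a : M, is_open a -> is_open (f a);
  pre_top : f (top M) = top N;
  pre_sup_open : forall S : M -> Prop, (forall x, S x -> is_open x) ->
    f (sup M S) = sup N (img f S);
  pre_meet : forall a b : M, f (meet M a b) = meet N (f a) (f b);
  pre_sup_LC : forall s : list M, (forall x, In x s -> is_LC x) ->
    f (sup M (fun x => In x s)) = sup N (img f (fun x => In x s))
}.

Definition lc_ext {M N : MTAlgebra} (F : M -> N) (a : M) : N :=
  sup N (img F (fun x => is_LC x /\ le M x a)).

Lemma idP_lc_ext (M : MTAlgebra) : idP M = lc_ext (fun x : M => x).
Proof. apply functional_extensionality. intros a. symmetry. apply sup_img_id. Qed.

Lemma lc_ext_ext (M N : MTAlgebra) (F G : M -> N) (a : M) :
  (forall x, is_LC x -> F x = G x) -> lc_ext F a = lc_ext G a.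
Proof. intros H. apply sup_img_ext. intros x [Hx _]. auto. Qed.

Lemma proximity_pre (M N : MTAlgebra) (f : M -> N) :
  proximity f -> pre_proximity f.
Proof. intros (Hopen & Htop & _ & Hsup & Hmeet & HLC & _). constructor; auto. Qed.

Lemma proximity_lc_ext_eq (M N : MTAlgebra) (f : M -> N) :
  proximity f -> forall a, f a = lc_ext f a.
Proof. intros (_ & _ & _ & _ & _ & _ & H). exact H. Qed.

Section PreProximity.
Variables M N : MTAlgebra.
Variable f : M -> N.
Hypothesis Hf : pre_proximity f.

Lemma pre_mono (a b : M) : le M a b -> le N (f a) (f b).
Proof.
  intros H. rewrite <- (meet_eq_l _ _ _ H), (pre_meet _ Hf). apply meet_le_r.
Qed.

Lemma pre_bot : f (bot M) = bot N.
Proof.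
  rewrite <- (sup_nil M), (pre_sup_LC _ Hf) by (intros x []).
  apply le_bot_eq, sup_least. intros y [x [[] _]].
Qed.

Lemma pre_join_LC (x y : M) :
  is_LC x -> is_LC y -> f (join M x y) = join N (f x) (f y).
Proof.
  intros Hx Hy. rewrite <- sup_pair, (pre_sup_LC _ Hf), <- sup_pair.
  - apply sup_ext. intros z. apply img_In.
  - intros z [<-|[<-|[]]]; assumption.
Qed.

(** [f] preserves the complement of an open [v], since [v] and [-v] are
    locally closed and [f] preserves their meet [bot] and join [top]. *)
Lemma pre_LC (x : M) : is_LC x -> is_LC (f x).
Proof.
  rewrite !is_LC_open_diff. intros [u [v [Hu [Hv ->]]]].
  exists (f u), (f v). split; [|split]; [apply (pre_open _ Hf) .. |]; auto.
  rewrite (pre_meet _ Hf). f_equal. apply compl_unique.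
  - rewrite <- (pre_meet _ Hf), compl_meet. apply pre_bot.
  - rewrite <- pre_join_LC, compl_join by auto using open_LC, compl_open_LC.
    apply (pre_top _ Hf).
Qed.

Lemma lc_ext_LC (x : M) : is_LC x -> lc_ext f x = f x.
Proof.
  intros H. apply le_antisym.
  - apply sup_least. intros y [z [[_ Hz] ->]]. apply pre_mono, Hz.
  - apply sup_upper. exists x. split; [split; [exact H | apply le_refl] | reflexivity].
Qed.

Lemma lc_ext_le (a : M) : le N (lc_ext f a) (f a).
Proof. apply sup_least. intros y [x [[_ Hx] ->]]. apply pre_mono, Hx. Qed.

Lemma lc_ext_mono (a b : M) : le M a b -> le N (lc_ext f a) (lc_ext f b).
Proof.
  intros H. apply sup_mono. intros y [x [[Hx Hxa] ->]]. exists (f x).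
  split; [|apply le_refl]. exists x.
  split; [split; [exact Hx | apply (le_trans M _ a); auto] | reflexivity].
Qed.

(** Locally closed elements are closed under meets, so the meet of two
    approximants from below is again one. *)
Lemma lc_ext_meet (a b : M) :
  lc_ext f (meet M a b) = meet N (lc_ext f a) (lc_ext f b).
Proof.
  apply le_antisym.
  - apply le_meet; apply lc_ext_mono; (apply meet_le_l || apply meet_le_r).
  - apply meet_sup_sup_le. intros s t [x [[Hx Hxa] ->]] [y [[Hy Hyb] ->]].
    rewrite <- (pre_meet _ Hf). apply sup_upper. exists (meet M x y).
    split; [split; [apply LC_meet | apply meet_mono] | ]; auto.
Qed.

Lemma lc_ext_sup_LC (s : list M) : (forall x, In x s -> is_LC x) ->
  lc_ext f (sup M (fun x => In x s)) = sup N (img (lc_ext f) (fun x => In x s)).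
Proof.
  intros Hs. apply le_antisym.
  - apply (le_trans N _ _ _ (lc_ext_le _)). rewrite (pre_sup_LC _ Hf s Hs).
    apply sup_mono. intros y [x [Hx ->]]. exists (lc_ext f x).
    split; [exists x; auto | rewrite lc_ext_LC by auto; apply le_refl].
  - apply sup_least. intros y [x [Hx ->]]. apply lc_ext_mono, sup_upper, Hx.
Qed.

Lemma proximity_lc_ext : proximity (lc_ext f).
Proof.
  repeat split.
  - intros a Ha. rewrite lc_ext_LC by (apply open_LC, Ha). apply (pre_open _ Hf), Ha.
  - rewrite lc_ext_LC by apply open_LC, open_top. apply (pre_top _ Hf).
  - intros a b _ _. apply lc_ext_meet.
  - intros S HS. rewrite lc_ext_LC by (apply open_LC, open_sup, HS).
    rewrite (pre_sup_open _ Hf S HS). apply sup_img_ext.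
    intros x Hx. symmetry. apply lc_ext_LC, open_LC, HS, Hx.
  - apply lc_ext_meet.
  - apply lc_ext_sup_LC.
  - intros a. apply lc_ext_ext. intros x Hx. symmetry. apply lc_ext_LC, Hx.
Qed.

End PreProximity.

Lemma pre_proximity_id (M : MTAlgebra) : pre_proximity (fun x : M => x).
Proof. constructor; intros; auto; symmetry; apply sup_img_id. Qed.

Lemma pre_proximity_comp (M1 M2 M3 : MTAlgebra) (f : M1 -> M2) (g : M2 -> M3) :
  pre_proximity f -> pre_proximity g -> pre_proximity (fun x => g (f x)).
Proof.
  intros Hf Hg. constructor.
  - intros a Ha. apply (pre_open _ Hg), (pre_open _ Hf), Ha.
  - rewrite (pre_top _ Hf). apply (pre_top _ Hg).
  - intros S HS. rewrite (pre_sup_open _ Hf S HS), (pre_sup_open _ Hg), sup_img_comp.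
    + reflexivity.
    + intros y [x [Hx ->]]. apply (pre_open _ Hf), HS, Hx.
  - intros a b. rewrite (pre_meet _ Hf). apply (pre_meet _ Hg).
  - intros s Hs. rewrite (pre_sup_LC _ Hf s Hs).
    rewrite (sup_ext _ _ (fun y => In y (map f s))) by apply img_In.
    rewrite (pre_sup_LC _ Hg).
    + rewrite <- (sup_img_comp _ _ _ f g). apply sup_ext. intros z.
      split; intros [y [Hy ->]]; exists y; split; auto; apply img_In, Hy.
    + intros y Hy. apply in_map_iff in Hy. destruct Hy as [x [<- Hx]].
      apply (pre_LC _ _ _ Hf), Hs, Hx.
Qed.

Theorem theorem3p15 :
  (* (a) *)
  (forall M : MTAlgebra, proximity (idP M)) /\
  (* (b) *)
  (forall (M1 M2 M3 : MTAlgebra) (f : M1 -> M2) (g : M2 -> M3),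
      proximity f -> proximity g -> proximity (star g f)) /\
  (* (c) *)
  (forall (M1 M2 M3 M4 : MTAlgebra) (f : M1 -> M2) (g : M2 -> M3) (h : M3 -> M4),
      proximity f -> proximity g -> proximity h ->
      forall a : M1,
        star (star h g) f a
          = sup M4 (img (fun x => h (g (f x))) (fun x => is_LC x /\ le M1 x a)) /\
        sup M4 (img (fun x => h (g (f x))) (fun x => is_LC x /\ le M1 x a))
          = star h (star g f) a) /\
  (* (d) *)
  (forall (M N : MTAlgebra) (f : M -> N),
      proximity f -> star (idP N) f = f /\ star f (idP M) = f).
Proof.
  split; [|split; [|split]].
  - intros M. rewrite idP_lc_ext. apply proximity_lc_ext, pre_proximity_id.
  - intros M1 M2 M3 f g Hf Hg. apply proximity_lc_ext, pre_proximity_comp;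
      apply proximity_pre; assumption.
  - intros M1 M2 M3 M4 f g h Hf Hg Hh a.
    apply proximity_pre in Hf, Hg, Hh. split; apply lc_ext_ext; intros x Hx.
    + apply lc_ext_LC; [apply pre_proximity_comp | apply (pre_LC _ _ _ Hf)]; auto.
    + f_equal. symmetry. apply lc_ext_LC; auto using pre_proximity_comp.
  - intros M N f Hf. split; apply functional_extensionality; intros a;
      rewrite (proximity_lc_ext_eq _ _ _ Hf a); apply lc_ext_ext; intros x Hx.
    + apply idP_LC, (pre_LC _ _ _ (proximity_pre _ _ _ Hf)), Hx.
    + rewrite idP_LC by exact Hx. reflexivity.
Qed.
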